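(* Let $m=2k+1$ with $k$ a positive integer, let $n$ be a positive integer, and let $\{B_1,\dots,B_{k(n-1)+1}\}$ be a basis for $\Gamma_{k,n}$. For $i\in[n]$ let $\vec d_i$ be the $n$-dimensional row vector with $\frac12$ in the $i$-th and $(n-i+1)$-th entries and $0$ elsewhere, and let $C_i$ be the $k\times n$ $(0,1)$-matrix whose $i$-th column is all $1$'s and other entries $0$. For $1\le i\le \lceil n/2\rceil-1$ define the $m\times n$ matrix $\tilde C_i=\begin{pmatrix} C_i\\ \vec d_i\\ C_i^\pi\end{pmatrix}$. If $n$ is even, define $\tilde B_i=\begin{pmatrix} B_i\\ \vec d_{n/2}\\ B_i^\pi\end{pmatrix}$; if $n$ is odd, define $\tilde B_i=\begin{pmatrix} B_i\\ \vec e_{\lceil n/2\rceil}\\ B_i^\pi\end{pmatrix}$, where $\vec e_{\lceil n/2\rceil}$ is the $n$-dimensional unit row vector with $1$ in entry $\lceil n/2\rceil$. Then $\{\tilde B_1,\dots,\tilde B_{k(n-1)+1},\tilde C_1,\dots,\tilde C_{\lceil n/2\rceil-1}\}$ is a basis for $\Gamma^\pi_{m,n}$.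
   Context: A real matrix is stochastic if its entries are nonnegative and each row sums to $1$. $\Gamma_{k,n}$ is the set of $k\times n$ stochastic matrices. For $A=(a_{i,j})\in M_{p,n}$, $A^\pi$ is the $p\times n$ matrix with $(A^\pi)_{i,j}=a_{p+1-i,n+1-j}$; $A$ is centrosymmetric if $A=A^\pi$. $\Gamma^\pi_{m,n}$ is the set of $m\times n$ centrosymmetric stochastic matrices; for $m=2k+1$ it is an affine set of dimension $k(n-1)+\lceil n/2\rceil-1$. A basis for such a set $\Gamma$ of affine dimension $d$ means a set of $d+1$ linearly independent elements of $\Gamma$ whose linear span contains $\Gamma$. Block notation $\begin{pmatrix}X\\ \vec v\\ Y\end{pmatrix}$ means the $k\times n$ matrix $X$, then the row $\vec v$, then the $k\times n$ matrix $Y$, stacked vertically. *)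

From mathcomp Require Import all_boot all_order all_algebra.
Set Implicit Arguments. Unset Strict Implicit. Unset Printing Implicit Defensive.
Import Order.TTheory GRing.Theory Num.Theory.
Local Open Scope ring_scope.

Section Defs.
Variable R : realFieldType.

Definition stochastic (p n : nat) (A : 'M[R]_(p, n)) : Prop :=
  (forall i j, 0 <= A i j) /\ (forall i, \sum_(j < n) A i j = 1).

(* A^pi : (A^pi)_{i,j} = a_{p+1-i, n+1-j} (1-indexed); rev_ord is 0-indexed reversal *)
Definition mx_pi (p n : nat) (A : 'M[R]_(p, n)) : 'M[R]_(p, n) :=
  \matrix_(i < p, j < n) A (rev_ord i) (rev_ord j).

Definition centrosymmetric (p n : nat) (A : 'M[R]_(p, n)) : Prop := A = mx_pi A.

Definition Gamma (p n : nat) (A : 'M[R]_(p, n)) : Prop := stochastic A.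

Definition Gamma_pi (p n : nat) (A : 'M[R]_(p, n)) : Prop :=
  stochastic A /\ centrosymmetric A.

Definition is_basis (p n N : nat) (S : 'M[R]_(p, n) -> Prop)
    (F : 'I_N -> 'M[R]_(p, n)) : Prop :=
  (forall i, S (F i)) /\
  (forall c : 'I_N -> R, \sum_(i < N) c i *: F i = 0 -> forall i, c i = 0) /\
  (forall A, S A -> exists c : 'I_N -> R, A = \sum_(i < N) c i *: F i).

(* vectors, with 0-indexed positions: position i (0-indexed) = entry i+1 *)
(* d_{i+1}: 1/2 at 0-indexed entries i and n-1-i, 0 elsewhere *)
Definition dvec (n i : nat) : 'rV[R]_n :=
  \row_(l < n) (if (l == i :> nat) || (l == (n - 1 - i)%N :> nat) then 2^-1 else 0).

(* e_{i+1}: 1 at 0-indexed entry i *)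
Definition evec (n i : nat) : 'rV[R]_n :=
  \row_(l < n) (if l == i :> nat then 1 else 0).

(* C_{i+1}: k x n, column i (0-indexed) all ones *)
Definition Cmat (k n i : nat) : 'M[R]_(k, n) :=
  \matrix_(r < k, l < n) (if l == i :> nat then 1 else 0).

Definition stack (k n : nat) (X : 'M[R]_(k, n)) (v : 'rV[R]_n)
    (Y : 'M[R]_(k, n)) : 'M[R]_(k + (1 + k), n) :=
  col_mx X (col_mx v Y).

(* middle row of tilde B: d_{n/2} if n even, e_{ceil(n/2)} if n odd *)
Definition mid_row (n : nat) : 'rV[R]_n :=
  if odd n then evec n (n./2) else dvec n (n./2).-1.

Definition Btilde (k n : nat) (B : 'M[R]_(k, n)) : 'M[R]_(k + (1 + k), n) :=
  stack B (mid_row n) (mx_pi B).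

(* tilde C_{i+1}, for 0-indexed i (i.e. 1-indexed i+1 in 1..ceil(n/2)-1) *)
Definition Ctilde (k n i : nat) : 'M[R]_(k + (1 + k), n) :=
  stack (Cmat k n i) (dvec n i) (mx_pi (Cmat k n i)).

Definition tilde_family (k n N : nat) (B : 'I_N -> 'M[R]_(k, n))
    (i : 'I_(N + (uphalf n).-1)) : 'M[R]_(k + (1 + k), n) :=
  match split i with
  | inl a => Btilde (B a)
  | inr b => Ctilde k n b
  end.

End Defs.

(* A centrosymmetric (2k+1) x n matrix is [stack X v X^pi] with v a symmetric row,
   and every member of the family has this shape, so everything is decided on the
   top block X and the middle row v.  Let h = ceil(n/2) - 1.  At a position y < h
   the middle row of every B~_i vanishes while the middle row d_{y+1} of C~_{y+1}
   is the only one of the d's not vanishing there (it equals 1/2), so the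
   coefficient of C~_{y+1} is forced to be 2 v_y.  Independence follows, since the
   B_i are independent.
   For spanning, X - sum_y 2 v_y C_{y+1} has constant row sums, hence is a
   combination of the B_i whose coefficients sum to that row sum (shift it by a
   constant matrix to reduce to stochastic matrices).  The middle rows then differ
   by a symmetric row with zero sum vanishing at the positions y < h, hence
   everywhere except at the one or two central positions, where it is constant by
   symmetry: so it is zero. *)

From HB Require Import structures.
From mathcomp Require Import all_boot all_order all_algebra zify lra.
Import Order.TTheory GRing.Theory Num.Theory.
Set Implicit Arguments.
Unset Strict Implicit.
Unset Printing Implicit Defensive.
Local Open Scope ring_scope.

Section Centrosymmetry.
Context {R : realFieldType}.

Fact mx_pi_is_linear p n : linear (@mx_pi R p n).
Proof. by move=> a A B; apply/matrixP => i j; rewrite !mxE. Qed.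

HB.instance Definition _ p n :=
  GRing.isLinear.Build R 'M[R]_(p, n) 'M[R]_(p, n) _ (@mx_pi R p n)
    (@mx_pi_is_linear p n).

Lemma mx_piK p n : involutive (@mx_pi R p n).
Proof. by move=> A; apply/matrixP => i j; rewrite !mxE !rev_ordK. Qed.

Lemma centrosymmetric_rowE n (v : 'rV[R]_n) j :
  centrosymmetric v -> v 0 (rev_ord j) = v 0 j.
Proof. by move=> cs; rewrite [in LHS]cs mxE rev_ordK (ord1 (rev_ord 0)). Qed.

Section Stack.
Variables k n : nat.

Lemma rev_ord_lshift (i : 'I_k) :
  rev_ord (lshift (1 + k) i) = rshift k (rshift 1 (rev_ord i)).
Proof. by apply/val_inj => /=; have := ltn_ord i; lia. Qed.

Lemma rev_ord_rshift_rshift (i : 'I_k) :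
  rev_ord (rshift k (rshift 1 i) : 'I_(k + (1 + k))) = lshift (1 + k) (rev_ord i).
Proof. by apply/val_inj => /=; have := ltn_ord i; lia. Qed.

Lemma rev_ord_mid (z : 'I_1) :
  rev_ord (rshift k (lshift k z) : 'I_(k + (1 + k))) = rshift k (lshift k z).
Proof. by apply/val_inj => /=; have := ltn_ord z; lia. Qed.

Lemma mx_pi_stack (X : 'M[R]_(k, n)) v Y :
  mx_pi (stack X v Y) = stack (mx_pi Y) (mx_pi v) (mx_pi X).
Proof.
apply/matrixP => i j; rewrite mxE /stack -(splitK i).
case: (split i) => [a|b] /=; first by rewrite rev_ord_lshift !col_mxEd col_mxEu mxE.
rewrite -(splitK b); case: (split b) => [z|c] /=.
  by rewrite rev_ord_mid !col_mxEd !col_mxEu mxE (ord1 (rev_ord z)) (ord1 z).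
by rewrite rev_ord_rshift_rshift col_mxEu !col_mxEd mxE.
Qed.

Lemma centrosymmetric_stack (X : 'M[R]_(k, n)) v Y :
  centrosymmetric (stack X v Y) -> Y = mx_pi X /\ centrosymmetric v.
Proof.
rewrite /centrosymmetric mx_pi_stack /stack.
by case/eq_col_mx => _ /eq_col_mx [].
Qed.

Lemma stack_pi_centrosymmetric (X : 'M[R]_(k, n)) v :
  centrosymmetric v -> centrosymmetric (stack X v (mx_pi X)).
Proof. by move=> v_cs; rewrite /centrosymmetric mx_pi_stack mx_piK -v_cs. Qed.

Lemma sum_stack N (c : 'I_N -> R) (X Y : 'I_N -> 'M[R]_(k, n)) v :
  \sum_i c i *: stack (X i) (v i) (Y i) =
  stack (\sum_i c i *: X i) (\sum_i c i *: v i) (\sum_i c i *: Y i).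
Proof.
rewrite /stack; elim: (index_enum _) => [|i r IH]; first by rewrite !big_nil !col_mx0.
by rewrite !big_cons IH !scale_col_mx !add_col_mx.
Qed.

End Stack.
End Centrosymmetry.

Section Stochastic.
Context {R : realFieldType}.

Lemma stochastic_col_mx p q n (A : 'M[R]_(p, n)) (B : 'M[R]_(q, n)) :
  stochastic (col_mx A B) <-> stochastic A /\ stochastic B.
Proof.
split=> [[ge0 sum1]|[[A0 A1] [B0 B1]]].
  split; split=> [i j|i].
  - by have := ge0 (lshift q i) j; rewrite col_mxEu.
  - by have := sum1 (lshift q i); under eq_bigr do rewrite col_mxEu.
  - by have := ge0 (rshift p i) j; rewrite col_mxEd.
  - by have := sum1 (rshift p i); under eq_bigr do rewrite col_mxEd.
split=> [i j|i]; rewrite -(splitK i); case: (split i) => a /=.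
- by rewrite col_mxEu.
- by rewrite col_mxEd.
- by under eq_bigr do rewrite col_mxEu.
- by under eq_bigr do rewrite col_mxEd.
Qed.

Lemma stochastic_stack k n (X : 'M[R]_(k, n)) v Y :
  stochastic (stack X v Y) <-> [/\ stochastic X, stochastic v & stochastic Y].
Proof.
rewrite /stack !stochastic_col_mx.
by split=> [[? [? ?]]|[? ? ?]].
Qed.

Lemma stochastic_mx_pi p n (A : 'M[R]_(p, n)) :
  stochastic A -> stochastic (mx_pi A).
Proof.
case=> ge0 sum1; split=> [i j|i]; rewrite ?mxE //.
rewrite (reindex_inj rev_ord_inj) /=.
by under eq_bigr do rewrite mxE rev_ordK.
Qed.

Lemma stochastic_scale p n (P : 'M[R]_(p, n)) t :
  (forall i j, 0 <= P i j) -> (forall i, \sum_j P i j = t) -> 0 < t ->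
  stochastic (t^-1 *: P).
Proof.
move=> ge0 sumt t_gt0; split=> [i j|i].
  by rewrite mxE mulr_ge0 // invr_ge0 ltW.
by under eq_bigr do rewrite mxE; rewrite -mulr_sumr sumt mulVf ?gt_eqF.
Qed.

Lemma sum_indicator n i : (i < n)%N ->
  \sum_(l < n) (if l == i :> nat then 1 else 0 : R) = 1.
Proof.
move=> lt_in; rewrite (bigD1 (Ordinal lt_in)) //= eqxx big1 ?addr0 // => l ne_l.
by case: eqP => // eq_li; case/eqP: ne_l; apply: val_inj.
Qed.

Lemma stochastic_evec n i : (i < n)%N -> stochastic (evec R n i).
Proof.
move=> lt_in; split=> [a l|a]; first by rewrite mxE; case: ifP.
by under eq_bigr do rewrite mxE; rewrite sum_indicator.
Qed.

Lemma stochastic_Cmat k n i : (i < n)%N -> stochastic (Cmat R k n i).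
Proof.
move=> lt_in; split=> [a l|a]; first by rewrite mxE; case: ifP.
by under eq_bigr do rewrite mxE; rewrite sum_indicator.
Qed.

Lemma stochastic_dvec n i : (i < n)%N -> i <> (n - 1 - i)%N ->
  stochastic (dvec R n i).
Proof.
move=> lt_in ne_i; split=> [a l|a]; first by rewrite mxE; case: ifP; rewrite ?invr_ge0.
have dvecE l : dvec R n i a l = 2^-1 * ((if l == i :> nat then 1 else 0) +
                                      (if l == (n - 1 - i)%N :> nat then 1 else 0)).
  by rewrite mxE; do 2!case: eqP => ? /=; try lia; rewrite ?addr0 ?add0r ?mulr1 ?mulr0.
under eq_bigr do rewrite dvecE.
rewrite -mulr_sumr big_split /= !sum_indicator; try lia.
by rewrite -[1 + 1]/(2%:R) mulVf ?pnatr_eq0.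
Qed.

Lemma rowsum_comb p n N (a : 'I_N -> R) (A : 'I_N -> 'M[R]_(p, n)) i :
  (forall l, stochastic (A l)) -> \sum_j (\sum_l a l *: A l) i j = \sum_l a l.
Proof.
move=> A_st; under eq_bigr do rewrite summxE.
rewrite exchange_big; apply: eq_bigr => l _.
by under eq_bigr do rewrite mxE; rewrite -mulr_sumr (proj2 (A_st l)) mulr1.
Qed.

Lemma ler_sum_nonneg (I : finType) (F : I -> R) i :
  (forall j, 0 <= F j) -> F i <= \sum_j F j.
Proof. by move=> F_ge0; rewrite (bigD1 i) //= lerDl sumr_ge0. Qed.

Lemma Gamma_pi_stack k n (X : 'M[R]_(k, n)) v :
  stochastic X -> stochastic v -> centrosymmetric v -> Gamma_pi (stack X v (mx_pi X)).
Proof.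
move=> X_st v_st v_cs; split; last exact: stack_pi_centrosymmetric.
by apply/stochastic_stack; split=> //; apply: stochastic_mx_pi.
Qed.

End Stochastic.

Lemma uphalf_predE n : (uphalf n).-1 = (odd n + n./2).-1 /\ n = (odd n + n./2 + n./2)%N.
Proof. by rewrite uphalf_half; split=> //; have := odd_double_half n; lia. Qed.

Section CentrosymmetricRows.
Context {R : realFieldType} (n : nat).
Local Notation h := (uphalf n).-1.

Lemma uphalf_pred_leq : (h <= n)%N.
Proof. by have [-> e] := uphalf_predE n; lia. Qed.

Lemma low_index {y} : (y < h)%N -> (y < n)%N /\ y <> (n - 1 - y)%N.
Proof. by have [-> e] := uphalf_predE n; lia. Qed.

Lemma dvec_centrosymmetric i : (i < n)%N -> centrosymmetric (dvec R n i).
Proof.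
move=> lt_in; apply/rowP => l; rewrite !mxE /=; have := ltn_ord l.
move=> lt_ln; congr (if _ then _ else _).
by apply/orP/orP; case=> /eqP ?; [right|left|right|left]; apply/eqP; lia.
Qed.

Lemma mid_row_low (y : 'I_h) : mid_row R n 0 (widen_ord uphalf_pred_leq y) = 0.
Proof.
have [eh e] := uphalf_predE n; have lt_yh := ltn_ord y.
rewrite /mid_row; case: ifP => odd_n; rewrite odd_n /= in e eh; rewrite mxE /=.
  by case: ifP => // /eqP; lia.
by case: ifP => // /orP[] /eqP; lia.
Qed.

Lemma dvec_low (y y' : 'I_h) :
  dvec R n y' 0 (widen_ord uphalf_pred_leq y) = if y' == y then 2^-1 else 0.
Proof.
have [eh e] := uphalf_predE n; have lt_yh := ltn_ord y; have lt_y'h := ltn_ord y'.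
rewrite mxE -val_eqE /=; congr (if _ then _ else _).
by apply/orP/eqP => [[] /eqP|->]; [lia|lia|left].
Qed.

Lemma comb_mid_dvec_low (s : R) (c : 'I_h -> R) (y : 'I_h) :
  (s *: mid_row R n + \sum_y' c y' *: dvec R n y') 0 (widen_ord uphalf_pred_leq y) = c y / 2.
Proof.
rewrite mxE [X in X + _]mxE mid_row_low mulr0 add0r summxE.
rewrite (bigD1 y) //= big1 ?addr0 => [|y' ne_y]; rewrite mxE dvec_low.
  by rewrite eqxx.
by rewrite (negbTE ne_y) mulr0.
Qed.

Hypothesis n_gt0 : (0 < n)%N.

Lemma half_lt : (n./2 < n)%N.
Proof. by have [_ e] := uphalf_predE n; lia. Qed.

Lemma middle_index (j : 'I_n) : ~~ (j < h)%N -> ~~ (rev_ord j < h)%N ->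
  j = Ordinal half_lt \/ j = rev_ord (Ordinal half_lt).
Proof.
have [-> e] := uphalf_predE n; have := ltn_ord j; rewrite /= => lt_jn lo hi.
have [eq_j|eq_j] : j = n./2 :> nat \/ j = (n - 1 - n./2)%N :> nat by lia.
  by left; apply: val_inj.
by right; apply: val_inj => /=; lia.
Qed.

Lemma mid_row_stochastic : stochastic (mid_row R n).
Proof.
rewrite /mid_row; have [_ e] := uphalf_predE n.
case: ifP => odd_n; rewrite odd_n /= in e.
  by apply: stochastic_evec; lia.
by apply: stochastic_dvec; lia.
Qed.

Lemma mid_row_centrosymmetric : centrosymmetric (mid_row R n).
Proof.
rewrite /mid_row; have [_ e] := uphalf_predE n.
case: ifP => odd_n; rewrite odd_n /= in e; last by apply: dvec_centrosymmetric; lia.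
apply/rowP => l; rewrite !mxE /=; have := ltn_ord l.
by move=> lt_ln; congr (if _ then _ else _); apply/eqP/eqP; lia.
Qed.

Lemma rowsum_mid_dvec (s : R) (c : 'I_h -> R) :
  \sum_j (s *: mid_row R n + \sum_y c y *: dvec R n y) 0 j = s + \sum_y c y.
Proof.
under eq_bigr do rewrite mxE [X in X + _]mxE.
rewrite big_split /= -mulr_sumr (proj2 mid_row_stochastic) mulr1 rowsum_comb // => y.
by have [? ?] := low_index (ltn_ord y); apply: stochastic_dvec.
Qed.

Lemma centrosymmetric_row_eq0 (f : 'rV[R]_n) :
  centrosymmetric f -> (forall y : 'I_h, f 0 (widen_ord uphalf_pred_leq y) = 0) ->
  \sum_j f 0 j = 0 -> f = 0.
Proof.
move=> f_cs f_low' f_sum; pose j0 := Ordinal half_lt.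
have f_low (j : 'I_n) : (j < h)%N -> f 0 j = 0.
  by move=> lt_jh; rewrite -(f_low' (Ordinal lt_jh)); congr (f 0 _); apply: val_inj.
pose middle := [pred j : 'I_n | ~~ (j < h)%N && ~~ (rev_ord j < h)%N].
have f_outer j : j \notin middle -> f 0 j = 0.
  rewrite inE negb_and !negbK => /orP[/f_low //|/f_low].
  by rewrite centrosymmetric_rowE.
have f_middle j : j \in middle -> f 0 j = f 0 j0.
  by case/andP=> lo hi; case: (middle_index lo hi) => ->; rewrite ?centrosymmetric_rowE.
have j0_middle : j0 \in middle.
  by have [eh e] := uphalf_predE n; rewrite inE /=; apply/andP; split; lia.
have : f 0 j0 *+ #|middle| = 0.
  rewrite -sumr_const -[RHS]f_sum [RHS](bigID (mem middle)) /=.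
  rewrite [X in _ + X]big1 ?addr0.
  - by apply: eq_bigr => j /f_middle.
  - by move=> j /f_outer.
have middle_gt0 : (0 < #|middle|)%N by apply/card_gt0P; exists j0.
move/eqP; rewrite mulrn_eq0 eqn0Ngt middle_gt0 => /eqP f_j0.
apply/rowP => j; rewrite mxE.
by case: (boolP (j \in middle)) => [/f_middle|/f_outer] ->.
Qed.

Lemma centrosymmetric_row_decomp (v : 'rV[R]_n) (c : 'I_h -> R) :
  centrosymmetric v ->
  (forall y : 'I_h, c y = 2 * v 0 (widen_ord uphalf_pred_leq y)) ->
  v = (\sum_j v 0 j - \sum_y c y) *: mid_row R n + \sum_y c y *: dvec R n y.
Proof.
move=> v_cs c_def; apply/eqP; rewrite -subr_eq0; apply/eqP/centrosymmetric_row_eq0.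
- rewrite /centrosymmetric [in RHS]linearB [in RHS]linearD [in RHS]linearZ.
  rewrite [in RHS]linear_sum /= -v_cs -mid_row_centrosymmetric.
  congr (_ - (_ + _)); apply: eq_bigr => y _; rewrite [RHS]linearZ; congr (_ *: _).
  by apply: dvec_centrosymmetric; case: (low_index (ltn_ord y)).
- move=> y; rewrite mxE [X in _ + X]mxE comb_mid_dvec_low c_def.
  by rewrite mulrC mulKf ?pnatr_eq0 ?subrr.
- under eq_bigr do rewrite mxE [X in _ + X]mxE.
  by rewrite sumrB rowsum_mid_dvec subrK subrr.
Qed.

End CentrosymmetricRows.

Section StochasticBasis.
Variables (R : realFieldType) (k n N : nat) (B : 'I_N -> 'M[R]_(k, n)).
Hypotheses (k_gt0 : (0 < k)%N) (n_gt0 : (0 < n)%N).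
Hypothesis B_basis : is_basis (@Gamma R k n) B.

Lemma basis_stochastic l : stochastic (B l).
Proof. exact: B_basis.1. Qed.

Lemma coef_sum_rowsum (a : 'I_N -> R) :
  \sum_l a l = \sum_j (\sum_l a l *: B l) (Ordinal k_gt0) j.
Proof. by rewrite rowsum_comb //; apply: basis_stochastic. Qed.

Lemma span_nonneg (P : 'M[R]_(k, n)) t :
  (forall i j, 0 <= P i j) -> (forall i, \sum_j P i j = t) -> 0 < t ->
  exists a : 'I_N -> R, P = \sum_l a l *: B l /\ \sum_l a l = t.
Proof.
move=> P_ge0 P_sum t_gt0; have [_ [_ B_span]] := B_basis.
have [b eQ] := B_span _ (stochastic_scale P_ge0 P_sum t_gt0).
have eP : P = \sum_l (t * b l) *: B l.
  under eq_bigr do rewrite -scalerA.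
  by rewrite -scaler_sumr -eQ scalerA mulfV ?gt_eqF ?scale1r.
by exists (fun l => t * b l); split; rewrite // coef_sum_rowsum -eP P_sum.
Qed.

Lemma span_rowsum (M : 'M[R]_(k, n)) s : (forall i, \sum_j M i j = s) ->
  exists a : 'I_N -> R, M = \sum_l a l *: B l /\ \sum_l a l = s.
Proof.
move=> M_sum; pose c := 1 + \sum_i \sum_j `|M i j|.
have P_ge1 i j : 1 <= (M + const_mx c) i j.
  have norm_le : `|M i j| <= \sum_i \sum_j `|M i j|.
    apply: le_trans (ler_sum_nonneg (F := fun i => \sum_j `|M i j|) i _) => [|i'].
      exact: (ler_sum_nonneg (F := fun j => `|M i j|) j _).
    exact: sumr_ge0.
  by rewrite !mxE; have := ler_norm (- M i j); rewrite normrN /c; lra.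
have c_gt0 : 0 < c.
  by apply: lt_le_trans ltr01 _; rewrite lerDl; do 2!(apply: sumr_ge0 => ? _).
have const_sum (i : 'I_k) : \sum_(j < n) const_mx c i j = c *+ n.
  by under eq_bigr do rewrite mxE; rewrite sumr_const card_ord.
have P_sum (i : 'I_k) : \sum_j (M + const_mx c) i j = s + c *+ n.
  by under eq_bigr do rewrite mxE; rewrite big_split /= M_sum const_sum.
have P_pos : 0 < s + c *+ n.
  rewrite -(P_sum (Ordinal k_gt0)); apply: lt_le_trans (ler_sum _ (fun j _ => P_ge1 _ j)).
  by rewrite sumr_const card_ord ltr0n.
have [a [eP sum_a]] := span_nonneg (fun i j => le_trans ler01 (P_ge1 i j)) P_sum P_pos.
have const_ge0 (i : 'I_k) (j : 'I_n) : 0 <= const_mx c i j by rewrite mxE ltW.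
have [b [eC sum_b]] : exists b : 'I_N -> R,
    const_mx c = \sum_l b l *: B l /\ \sum_l b l = c *+ n.
  by apply: span_nonneg const_ge0 const_sum _; rewrite pmulrn_lgt0.
exists (a \- b); split.
  by rewrite -[M](addrK (const_mx c)) eP eC -sumrB; apply: eq_bigr => l _; rewrite scalerBl.
by rewrite sumrB sum_a sum_b addrK.
Qed.

Local Notation h := (uphalf n).-1.

Lemma sum_tilde_family (c : 'I_(N + h) -> R) :
  let X := \sum_x c (lshift h x) *: B x + \sum_y c (rshift N y) *: Cmat R k n y in
  \sum_i c i *: tilde_family B i =
  stack X ((\sum_x c (lshift h x)) *: mid_row R n + \sum_y c (rshift N y) *: dvec R n y)
    (mx_pi X).
Proof.
move=> X; rewrite big_split_ord /=.
under eq_bigr => x _ do rewrite /tilde_family (unsplitK (inl _ x)).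
under [X in _ + X]eq_bigr => y _ do rewrite /tilde_family (unsplitK (inr _ y)).
rewrite /Btilde /Ctilde !sum_stack /stack !add_col_mx -scaler_suml /X linearD !linear_sum.
by congr (col_mx _ (col_mx _ (_ + _))); apply: eq_bigr => i _; rewrite linearZ.
Qed.

Lemma tilde_family_Gamma_pi i : Gamma_pi (tilde_family B i).
Proof.
rewrite /tilde_family; case: (split i) => [x|y]; apply: Gamma_pi_stack.
- exact: basis_stochastic.
- exact: mid_row_stochastic.
- exact: mid_row_centrosymmetric.
all: have [lt_yn ne_y] := low_index (ltn_ord y).
- exact: stochastic_Cmat.
- exact: stochastic_dvec.
- exact: dvec_centrosymmetric.
Qed.

Lemma tilde_family_free (c : 'I_(N + h) -> R) :
  \sum_i c i *: tilde_family B i = 0 -> forall i, c i = 0.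
Proof.
rewrite sum_tilde_family /stack => /eqP.
rewrite !col_mx_eq0 => /and3P[/eqP top0 /eqP mid0 _].
have c_right y : c (rshift N y) = 0.
  have := congr1 (fun v : 'rV_n => v 0 (widen_ord (uphalf_pred_leq n) y)) mid0.
  rewrite /= comb_mid_dvec_low mxE => /eqP.
  by rewrite mulf_eq0 invr_eq0 pnatr_eq0 orbF => /eqP.
have c_left : forall x, c (lshift h x) = 0.
  apply: B_basis.2.1; rewrite -[RHS]top0 [X in _ = _ + X]big1 ?addr0 // => y _.
  by rewrite c_right scale0r.
by move=> i; rewrite -(splitK i); case: (split i) => [x|y] /=; rewrite ?c_left ?c_right.
Qed.

Lemma tilde_family_span A : Gamma_pi A -> exists c, A = \sum_i c i *: tilde_family B i.
Proof.
have [X [v [Y ->]]] : exists X v Y, A = stack X v Y.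
  by exists (usubmx A), (usubmx (dsubmx A)), (dsubmx (dsubmx A)); rewrite /stack !vsubmxK.
case=> /stochastic_stack[X_st v_st _] /centrosymmetric_stack[-> v_cs].
pose c (y : 'I_h) := 2 * v 0 (widen_ord (uphalf_pred_leq n) y).
have C_st (y : 'I_h) : stochastic (Cmat R k n y).
  by apply: stochastic_Cmat; case: (low_index (ltn_ord y)).
have M_sum i : \sum_j (X - \sum_y c y *: Cmat R k n y) i j = 1 - \sum_y c y.
  by under eq_bigr do rewrite mxE [X in _ + X]mxE; rewrite sumrB X_st.2 rowsum_comb.
have [a [eM sum_a]] := span_rowsum M_sum.
pose cc i := match split i with inl x => a x | inr y => c y end.
have cc_left x : cc (lshift h x) = a x by rewrite /cc (unsplitK (inl _ x)).
have cc_right y : cc (rshift N y) = c y by rewrite /cc (unsplitK (inr _ y)).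
exists cc; rewrite sum_tilde_family /=.
have eX : X = \sum_x cc (lshift h x) *: B x + \sum_y cc (rshift N y) *: Cmat R k n y.
  rewrite -[X](subrK (\sum_y c y *: Cmat R k n y)) eM.
  by congr (_ + _); apply: eq_bigr => ? _; rewrite ?cc_left ?cc_right.
rewrite -eX; congr stack.
rewrite {1}(centrosymmetric_row_decomp n_gt0 v_cs (fun y => erefl : c y = _)) v_st.2 -sum_a.
by congr (_ *: _ + _); apply: eq_bigr => ? _; rewrite ?cc_left ?cc_right.
Qed.

End StochasticBasis.

Theorem mainTheorem10 (R : realFieldType) (k n : nat) (hk : (0 < k)%N) (hn : (0 < n)%N)
    (B : 'I_(k * (n - 1) + 1) -> 'M[R]_(k, n)) :
  is_basis (@Gamma R k n) B ->
  is_basis (@Gamma_pi R (k + (1 + k)) n) (tilde_family B).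
Proof.
move=> B_basis; split; [|split].
- exact: tilde_family_Gamma_pi.
- exact: tilde_family_free.
- exact: tilde_family_span.
Qed.
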